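(* Let $N$ be a finite set with $|N|\ge2$ and let $o\in\mathbb{R}^{\Upsilon}$ be an SE objective. Then there exists a unique $\tau_o\in\mathbb{R}^{\mathcal{S}}$ such that $\langle o,\eta\rangle_{\Upsilon}=\langle\tau_o,c_\eta\rangle_{\mathcal{S}}$ for all $\eta\in\mathbb{R}^{\Upsilon}$. Specifically, $$\tau_o(T)=\sum_{\emptyset\neq K\subseteq R}(-1)^{|R\setminus K|}\,o(b|K)\quad\text{for } T\in\mathcal{S},\ b\in T,\ R=T\setminus\{b\},$$ and this expression does not depend on the choice of $b\in T$.
   Context: $\mathrm{DAG}(N)$ is the set of acyclic directed graphs over $N$; $\mathrm{pa}_G(a)$ is the parent set of $a$ in $G$; $G\sim H$ (Markov equivalence) means same adjacencies and same immoralities. $\Upsilon=\{(a|B): a\in N,\ \emptyset\neq B\subseteq N\setminus\{a\}\}$; $\eta_G\in\mathbb{R}^{\Upsilon}$ has $\eta_G(a|B)=1$ if $B=\mathrm{pa}_G(a)$, else $0$. $o$ is an SE objective if $\langle o,\eta_G\rangle=\langle o,\eta_H\rangle$ whenever $G\sim H$. $\mathcal{S}=\{S\subseteq N:|S|\ge 2\}$, and for $\eta\in\mathbb{R}^{\Upsilon}$, $c_\eta\in\mathbb{R}^{\mathcal{S}}$ is $c_\eta(S)=\sum_{a\in S}\sum_{B:\,S\setminus\{a\}\subseteq B\subseteq N\setminus\{a\}}\eta(a|B)$. Convention: $o(b|\emptyset)=0$ for $b\in N$. *)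

From HB Require Import structures.
From mathcomp Require Import all_boot all_order all_algebra.
From mathcomp Require Import reals.
Set Implicit Arguments. Unset Strict Implicit. Unset Printing Implicit Defensive.
Import Order.TTheory GRing.Theory Num.Theory.
Local Open Scope ring_scope.

Section Defs.
Variables (N : finType) (R : realType).

(* A directed graph over N is given by its parent function: a -> b iff a \in pa b. *)
Definition edge (pa : N -> {set N}) : rel N := fun a b => a \in pa b.

Definition is_dag (pa : N -> {set N}) : bool :=
  [forall x, ~~ [exists y, (y \in pa x) && connect (edge pa) x y]].

Definition adjacent (pa : N -> {set N}) (a b : N) : bool :=
  (a \in pa b) || (b \in pa a).

Definition immorality (pa : N -> {set N}) (a b c : N) : bool :=
  [&& a \in pa c, b \in pa c, a != b & ~~ adjacent pa a b].

Definition markov_equiv (G H : N -> {set N}) : Prop :=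
  (forall a b, adjacent G a b = adjacent H a b) /\
  (forall a b c, immorality G a b c = immorality H a b c).

(* Upsilon = {(a|B) : B nonempty, a \notin B}; vectors in R^Upsilon are
   functions N -> {set N} -> R, only their values on Upsilon matter. *)
Definition in_Upsilon (a : N) (B : {set N}) : bool := (B != set0) && (a \notin B).

Definition innerU (o eta : N -> {set N} -> R) : R :=
  \sum_(a : N) \sum_(B : {set N} | in_Upsilon a B) o a B * eta a B.

Definition eta_G (pa : N -> {set N}) : N -> {set N} -> R :=
  fun a B => if B == pa a then 1 else 0.

Definition SE_objective (o : N -> {set N} -> R) : Prop :=
  forall G H, is_dag G -> is_dag H -> markov_equiv G H ->
    innerU o (eta_G G) = innerU o (eta_G H).

(* S = {S subset N : |S| >= 2}; vectors in R^S are functions {set N} -> R. *)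
Definition in_S (S : {set N}) : bool := (2 <= #|S|)%N.

Definition c_eta (eta : N -> {set N} -> R) (S : {set N}) : R :=
  \sum_(a in S) \sum_(B : {set N} | in_Upsilon a B && (S :\ a \subset B)) eta a B.

Definition innerS (tau c : {set N} -> R) : R :=
  \sum_(S : {set N} | in_S S) tau S * c S.

End Defs.

From HB Require Import structures.
From mathcomp Require Import all_boot all_order all_algebra.
From mathcomp Require Import reals.
From mathcomp Require Import lra.
Import Order.TTheory GRing.Theory Num.Theory.
Set Implicit Arguments. Unset Strict Implicit. Unset Printing Implicit Defensive.
Local Open Scope ring_scope.

(* The pairing <tau, c_eta> equals <tau_adj tau, eta>, where tau_adj tau (a|B)
   sums tau over the sets a |: K with K a nonempty subset of B.  Hence tau
   represents o iff, for every a, the function K |-> tau (a |: K) has zeta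
   transform o(a|.) on the subset lattice.  Moebius inversion then forces tau T
   to be the Moebius transform of o(b|.) at T :\ b for every b in T, and
   uniqueness follows by induction on #|T|.  What remains is that this
   transform does not depend on b.  For b != b', splitting it according to
   whether b' lies in K leaves the differences o(b | b' |: C) - o(b | C), which
   are symmetric in b and b': reversing the covered arrow b' -> b of the DAG
   with arrows C -> b, C -> b', b' -> b gives a Markov equivalent DAG, so the
   SE property equates the two scores. *)

Section SubsetLattice.
Variable N : finType.

Lemma big_subsetU1 (V : nmodType) (x : N) (X : {set N}) (F : {set N} -> V) :
  x \notin X ->
  \sum_(K : {set N} | K \subset x |: X) F K =
  \sum_(C : {set N} | C \subset X) (F C + F (x |: C)).
Proof.
move=> xX; rewrite big_split /= (bigID (fun K : {set N} => x \in K)) /= addrC.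
congr (_ + _).
- by apply: eq_bigl => K; rewrite -subsetD1 setU1K.
- rewrite (reindex_onto (fun C => x |: C) (fun K => K :\ x)) /=; last first.
    by move=> K /andP[_ xK]; rewrite setD1K.
  apply: eq_bigl => C; rewrite setU11 andbT.
  apply/andP/idP => [[CxX /eqP <-]|CX].
    by rewrite -(setU1K xX); apply: setSD.
  have xC : x \notin C by exact: contra (subsetP CX x) xX.
  by rewrite setU1K // eqxx setUS.
Qed.

Lemma setU1D (x : N) (C J : {set N}) : x \notin J -> (x |: C) :\: J = x |: (C :\: J).
Proof.
by move=> xJ; apply/setP => y; rewrite !inE; case: eqVneq => [->|_] /=; rewrite ?xJ.
Qed.

Variable R : pzRingType.

Lemma sum_sign_interval (J B : {set N}) : J \subset B ->
  \sum_(K : {set N} | (J \subset K) && (K \subset B)) (-1) ^+ #|K :\: J| = (J == B)%:R :> R.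
Proof.
move=> JB; have [->|JneB] := eqVneq J B.
  rewrite (big_pred1 B) ?setDv ?cards0 ?expr0 // => K.
  by rewrite /= eqEsubset andbC.
have /properP [_ [x xB xJ]] : J \proper B by rewrite properEneq JneB JB.
rewrite big_mkcondl /= -(setD1K xB) big_subsetU1 ?setD11 //.
apply: big1 => C CB.
have xC : x \notin C by apply/negP => /(subsetP CB); rewrite setD11.
have -> : (J \subset x |: C) = (J \subset C).
  by rewrite -{2}(setU1K xC) subsetD1 xJ andbT.
case: (J \subset C); last by rewrite addr0.
by rewrite setU1D // cardsU1 inE (negbTE xC) andbF add1n exprS mulN1r subrr.
Qed.

Lemma sum_mobius_subset (f : {set N} -> R) (B : {set N}) :
  \sum_(K : {set N} | K \subset B) \sum_(J : {set N} | J \subset K)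
     (-1) ^+ #|K :\: J| * f J = f B.
Proof.
rewrite (exchange_big_dep (fun J : {set N} => J \subset B)) /=; last first.
  by move=> K J KB JK; exact: subset_trans JK KB.
transitivity (\sum_(J : {set N} | J \subset B) (J == B)%:R * f J).
  apply: eq_bigr => J JB; rewrite -big_distrl /= -(sum_sign_interval JB).
  by congr (_ * _); apply: eq_bigl => K; rewrite andbC.
rewrite (bigD1 B) //= eqxx mul1r big1 ?addr0 // => J /andP[_ /negbTE ->].
by rewrite mul0r.
Qed.
End SubsetLattice.

Section Adjoint.
Variables (N : finType) (R : realType).
Implicit Types (tau : {set N} -> R) (o eta : N -> {set N} -> R) (a b : N) (B T : {set N}).

Definition tau_adj tau (a : N) (B : {set N}) : R :=
  \sum_(S : {set N} | [&& in_S S, a \in S & S :\ a \subset B]) tau S.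

Lemma innerS_c_eta tau eta : innerS tau (c_eta eta) = innerU (tau_adj tau) eta.
Proof.
transitivity (\sum_(S : {set N} | in_S S) \sum_(a in S)
    \sum_(B : {set N} | in_Upsilon a B && (S :\ a \subset B)) tau S * eta a B).
  by apply: eq_bigr => S _; rewrite big_distrr; apply: eq_bigr => a _; rewrite big_distrr.
rewrite (exchange_big_dep xpredT) //=; apply: eq_bigr => a _.
rewrite (exchange_big_dep (in_Upsilon a)) /=; last by move=> S B _ /andP[].
apply: eq_bigr => B UB; rewrite /tau_adj big_distrl; apply: eq_bigl => S.
by rewrite UB -andbA.
Qed.

Lemma tau_adj_setU1 tau a B : a \notin B ->
  tau_adj tau a B = \sum_(K : {set N} | (K != set0) && (K \subset B)) tau (a |: K).
Proof.
move=> aB; rewrite /tau_adj (reindex_onto (fun K => a |: K) (fun S => S :\ a)) /=; last first.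
  by move=> S /and3P[_ aS _]; rewrite setD1K.
apply: eq_bigl => K; rewrite setU11 /=.
have [aK|aK] := boolP (a \in K).
  have /negbTE -> : (a |: K) :\ a != K by apply: contraTneq aK => <-; rewrite setD11.
  rewrite andbF; apply/esym/negbTE; apply: contraNN aB => /andP[_ /subsetP]; exact.
by rewrite setU1K // eqxx andbT /in_S cardsU1 aK add1n ltnS card_gt0.
Qed.

(* The paper's convention o(b|set0) = 0; o itself is arbitrary outside Upsilon. *)
Definition oext o (b : N) (K : {set N}) : R := if K == set0 then 0 else o b K.

Definition mobius_tau o (b : N) (T : {set N}) : R :=
  \sum_(K : {set N} | (K != set0) && (K \subset T :\ b))
     (-1) ^+ #|(T :\ b) :\: K| * o b K.

Lemma mobius_tauE o b T : mobius_tau o b T =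
  \sum_(K : {set N} | K \subset T :\ b) (-1) ^+ #|(T :\ b) :\: K| * oext o b K.
Proof.
rewrite [RHS](bigD1 set0) ?sub0set //= /oext eqxx mulr0 add0r.
by apply: eq_big => [K|K /andP[/negbTE -> _]]; rewrite // andbC.
Qed.

Lemma tau_adj_mobius_tau o a B : a \notin B -> B != set0 ->
  tau_adj (mobius_tau o a) a B = o a B.
Proof.
move=> aB B0; rewrite tau_adj_setU1 //.
transitivity (\sum_(K : {set N} | K \subset B) \sum_(J : {set N} | J \subset K)
    (-1) ^+ #|K :\: J| * oext o a J); last by rewrite sum_mobius_subset /oext (negbTE B0).
rewrite [RHS](bigD1 set0) ?sub0set //= (big_pred1 set0 (@subset0 _)) /oext eqxx mulr0 add0r.
apply: eq_big => [K|K /andP[_ KB]]; first by rewrite andbC.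
rewrite mobius_tauE setU1K //; exact: contra (subsetP KB a) aB.
Qed.

Lemma tau_adj_inj tau1 tau2 :
  (forall a B, in_Upsilon a B -> tau_adj tau1 a B = tau_adj tau2 a B) ->
  forall T, in_S T -> tau1 T = tau2 T.
Proof.
move=> eq_adj T; have [n] := ubnP #|T|; elim: n T => // n IH T /ltnSE leTn T2.
have [a aT] : exists a, a \in T by apply/card_gt0P; exact: ltnW T2.
have UaT : in_Upsilon a (T :\ a).
  by rewrite /in_Upsilon setD11 andbT -card_gt0; rewrite /in_S (cardsD1 a T) aT in T2.
have eq_rest S : [&& in_S S, a \in S & S :\ a \subset T :\ a] && (S != T) ->
    tau1 S = tau2 S.
  case/andP => /and3P[S2 aS SaTa] neST; apply: IH S2.
  have ST : S \subset T by rewrite -(setD1K aS) -(setD1K aT) setUS.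
  by apply: leq_trans leTn; apply: proper_card; rewrite properEneq neST.
have Tin : [&& in_S T, a \in T & T :\ a \subset T :\ a] by rewrite T2 aT subxx.
move: (eq_adj a (T :\ a) UaT).
rewrite /tau_adj (bigD1 T Tin) [in X in _ = X](bigD1 T Tin) /=.
by rewrite (eq_bigr tau2 eq_rest) => /addIr.
Qed.

Definition dirac a0 B0 : N -> {set N} -> R := fun a B => ((a == a0) && (B == B0))%:R.

Lemma innerU_dirac o a B : in_Upsilon a B -> innerU o (dirac a B) = o a B.
Proof.
move=> UaB; rewrite /innerU (bigD1 a) //= (bigD1 B) //= /dirac !eqxx mulr1.
rewrite [X in _ + X]big1 => [|a' /negbTE a'a]; last first.
  by apply: big1 => B' _; rewrite a'a mulr0.
rewrite addr0 big1 ?addr0 // => B' /andP[_ /negbTE ->].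
by rewrite andbF mulr0.
Qed.
End Adjoint.

Section CoveredArrow.
Variable N : finType.
Implicit Types (C : {set N}) (p q : N).

(* Parents C for q and q |: C for p: the arrow q -> p is covered. *)
Definition covered_pa C p q : N -> {set N} :=
  fun x => if x == p then q |: C else if x == q then C else set0.

Lemma mem_covered_pa C p q u v : p != q -> (u \in covered_pa C p q v) =
  ((v == p) && ((u == q) || (u \in C))) || ((v == q) && (u \in C)).
Proof.
move=> pq; rewrite /covered_pa; case: (eqVneq v p) => [->|_].
  by rewrite (negbTE pq) in_setU1 orbF.
by case: (v == q); rewrite ?in_set0.
Qed.

Lemma adjacent_covered C p q u v : p != q -> adjacent (covered_pa C p q) u v =
  [|| (u == p) && (v == q), (u == q) && (v == p),
      ((v == p) || (v == q)) && (u \in C) | ((u == p) || (u == q)) && (v \in C)].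
Proof.
move=> pq; rewrite /adjacent !mem_covered_pa //.
by case: (u == p); case: (u == q); case: (v == p); case: (v == q);
   case: (u \in C); case: (v \in C).
Qed.

Lemma immorality_covered C p q a b c : p != q -> p \notin C -> q \notin C ->
  immorality (covered_pa C p q) a b c =
  [&& (c == p) || (c == q), a \in C, b \in C & a != b].
Proof.
move=> pq pC qC; have qp : q != p by rewrite eq_sym.
case: (eqVneq c p) => [->|cp]; [|case: (eqVneq c q) => [->|cq]];
  case: (eqVneq a p) => [->|ap]; try case: (eqVneq a q) => [->|aq];
  case: (eqVneq b p) => [->|bp]; try case: (eqVneq b q) => [->|bq];
  rewrite /immorality adjacent_covered // !mem_covered_pa //;
  rewrite ?eqxx ?(negbTE pq) ?(negbTE qp) ?(negbTE pC) ?(negbTE qC) /= ?andbF ?orbF //;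
  repeat match goal with H : is_true (_ != _) |- _ =>
    rewrite ?(negbTE H) /= ?andbF ?orbF {H} end;
  by case: (a \in C); case: (b \in C); rewrite /= ?andbF ?orbF ?andbT.
Qed.

Lemma covered_markov_equiv C p q : p != q -> p \notin C -> q \notin C ->
  markov_equiv (covered_pa C p q) (covered_pa C q p).
Proof.
move=> pq pC qC; have qp : q != p by rewrite eq_sym.
split=> [u v|a b c]; last by rewrite !immorality_covered // orbC.
rewrite !adjacent_covered // (orbC (v == q)) (orbC (u == q)).
by rewrite orbA (orbC (_ && _)) -orbA.
Qed.

Lemma is_dag_of_rank (pa : N -> {set N}) (r : N -> nat) :
  (forall u v, u \in pa v -> r u < r v)%N -> is_dag pa.
Proof.
move=> r_lt; apply/forallP => x; apply/negP => /existsP[y /andP[yx /connectP[s xs ys]]].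
have r_path z (s' : seq N) : path (edge pa) z s' -> (r z <= r (last z s'))%N.
  elim: s' z => //= w s' IHs z /andP[zw ws'].
  exact: leq_trans (ltnW (r_lt _ _ zw)) (IHs _ ws').
by have := r_lt _ _ yx; rewrite ltnNge ys r_path.
Qed.

Lemma is_dag_covered C p q : p != q -> p \notin C -> q \notin C ->
  is_dag (covered_pa C p q).
Proof.
move=> pq pC qC.
apply: (@is_dag_of_rank _ (fun x => if x == p then 2 else if x == q then 1 else 0)%N).
move=> u v; rewrite mem_covered_pa //.
have qp : (q == p) = false by rewrite eq_sym (negbTE pq).
have [->|up] := eqVneq u p; first by rewrite (negbTE pC) (negbTE pq) !andbF.
have [->|uq] := eqVneq u q.
  by rewrite (negbTE qC) !andbF orbF /= andbT => /eqP ->; rewrite eqxx.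
by case/orP => /andP[/eqP -> _]; rewrite ?qp eqxx.
Qed.
End CoveredArrow.

Section MobiusIndependence.
Variables (N : finType) (R : realType).
Implicit Types (o : N -> {set N} -> R) (b p q : N) (C T : {set N}).

Lemma innerU_eta_G o (pa : N -> {set N}) :
  innerU o (@eta_G _ R pa) = \sum_a (if in_Upsilon a (pa a) then o a (pa a) else 0).
Proof.
apply: eq_bigr => a _; rewrite big_mkcond (bigD1 (pa a)) //= /eta_G eqxx mulr1.
rewrite big1 ?addr0 // => B /negbTE neB; rewrite neB mulr0.
by case: (in_Upsilon a B).
Qed.

Lemma innerU_covered o C p q : p != q -> p \notin C -> q \notin C ->
  innerU o (@eta_G _ R (covered_pa C p q)) = o p (q |: C) + oext o q C.
Proof.
move=> pq pC qC; have qp : q != p by rewrite eq_sym.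
rewrite innerU_eta_G (bigD1 p) //= (bigD1 q) //= big1 ?addr0; last first.
  by move=> x /andP[xp xq]; rewrite /covered_pa (negbTE xp) (negbTE xq) /in_Upsilon eqxx.
rewrite /covered_pa eqxx (negbTE qp) eqxx /in_Upsilon /oext qC andbT.
have -> : (q |: C != set0) && (p \notin q |: C).
  by rewrite in_setU1 negb_or pq pC !andbT; apply/set0Pn; exists q; rewrite setU11.
by rewrite if_neg.
Qed.

Lemma SE_covered_reversal o C p q : SE_objective o ->
  p != q -> p \notin C -> q \notin C ->
  o p (q |: C) - oext o p C = o q (p |: C) - oext o q C.
Proof.
move=> SE pq pC qC; have qp : q != p by rewrite eq_sym.
have := SE _ _ (is_dag_covered pq pC qC) (is_dag_covered qp qC pC)
  (covered_markov_equiv pq pC qC).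
by rewrite !innerU_covered //; lra.
Qed.

Lemma mobius_tau_split o b b' T : b != b' -> b' \in T ->
  mobius_tau o b T = \sum_(C : {set N} | C \subset T :\ b :\ b')
     (-1) ^+ #|T :\ b :\ b' :\: C| * (o b (b' |: C) - oext o b C).
Proof.
move=> bb' b'T; rewrite mobius_tauE; set X := T :\ b :\ b'.
have b'X : b' \notin X by rewrite setD11.
have -> : T :\ b = b' |: X by rewrite setD1K // in_setD1 eq_sym bb'.
rewrite big_subsetU1 //; apply: eq_bigr => C CX.
have b'C : b' \notin C by apply: contra (subsetP CX b') b'X.
have -> : (b' |: X) :\: (b' |: C) = X :\: C.
  by apply/setP => y; rewrite !inE; case: eqVneq => [->|] /=; rewrite ?eqxx /= ?andbF.
have nb'XC : b' \notin X :\: C by rewrite inE (negbTE b'X) andbF.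
rewrite setU1D // cardsU1 nb'XC add1n exprS {2}/oext.
have /negbTE -> : b' |: C != set0 by apply/set0Pn; exists b'; rewrite setU11.
by rewrite mulN1r mulrBr addrC mulNr.
Qed.

Lemma mobius_tau_indep o b b' T : SE_objective o -> b \in T -> b' \in T ->
  mobius_tau o b T = mobius_tau o b' T.
Proof.
move=> SE bT b'T; have [<-//|bb'] := eqVneq b b'.
have b'b : b' != b by rewrite eq_sym.
rewrite (mobius_tau_split o bb' b'T) (mobius_tau_split o b'b bT).
have -> : T :\ b' :\ b = T :\ b :\ b' by apply/setP => y; rewrite !inE andbCA.
apply: eq_bigr => C CX; congr (_ * _).
have bC : b \notin C by apply/negP => /(subsetP CX); rewrite !inE eqxx andbF.
have b'C : b' \notin C by apply/negP => /(subsetP CX); rewrite !inE eqxx.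
exact: SE_covered_reversal.
Qed.
End MobiusIndependence.

Unset Implicit Arguments.

Theorem lemma10 (N : finType) (R : realType) (o : N -> {set N} -> R) :
  (2 <= #|N|)%N -> SE_objective o ->
  exists tau : {set N} -> R,
    (forall eta : N -> {set N} -> R, innerU o eta = innerS tau (c_eta eta)) /\
    (forall tau' : {set N} -> R,
        (forall eta : N -> {set N} -> R, innerU o eta = innerS tau' (c_eta eta)) ->
        forall T : {set N}, in_S T -> tau' T = tau T) /\
    (forall (T : {set N}) (b : N), in_S T -> b \in T ->
        tau T = \sum_(K : {set N} | (K != set0) && (K \subset T :\ b))
                  (-1) ^+ #|(T :\ b) :\: K| * o b K).
Proof.
move=> _ SE.
pose tau (T : {set N}) := if [pick b in T] is Some b then mobius_tau o b T else 0.
have tauE (T : {set N}) b : b \in T -> tau T = mobius_tau o b T.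
  rewrite /tau; case: pickP => [b0 b0T|/(_ b)->//] bT.
  exact: mobius_tau_indep.
have adj_tau a (B : {set N}) : in_Upsilon a B -> tau_adj tau a B = o a B.
  case/andP => B0 aB; rewrite -(tau_adj_mobius_tau o aB B0).
  by apply: eq_bigr => S /and3P[_ aS _]; rewrite (tauE _ a).
have represents eta : innerU o eta = innerS tau (c_eta eta).
  rewrite innerS_c_eta; apply: eq_bigr => a _; apply: eq_bigr => B UB.
  by rewrite adj_tau.
exists tau; split; [exact: represents | split=> [|T b _]; last exact: tauE].
move=> tau' represents' T; apply: tau_adj_inj => a B UB.
have := represents' (dirac R a B).
by rewrite represents !innerS_c_eta !innerU_dirac // => ->.
Qed.
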